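(* Let \(S\) be an inverse semigroup with zero and unit. The category \(\mathsf{Top}^S\) of actions of \(S\) on topological spaces (with \(S\)-equivariant continuous maps) and the category \(\mathsf{Top}^{\mathcal G(S)}\) of actions of the groupoid \(\mathcal G(S)\) on topological spaces (with \(\mathcal G(S)\)-equivariant maps) are isomorphic.
   Context: Inverse semigroups have zero \(0\) and unit \(1\); homomorphisms preserve them. \(E=E(S)\) is the idempotent semilattice (\(e\le f\iff ef=e\)). A character on \(E\) is a map \(\varphi\colon E\to\{0,1\}\) with \(\varphi(0)=0\), \(\varphi(1)=1\), \(\varphi(ef)=\varphi(e)\varphi(f)\). \(\hat E\) is the set of characters, with the topology generated by the sets \(U_e=\{\varphi:\varphi(e)=1\}\). \(S\) acts on \(\hat E\) by \(c_g\colon U_{g^*g}\to U_{gg^*}\), \(g\cdot\varphi(e)=\varphi(g^*eg)\). The groupoid \(\mathcal G(S)\) has object space \(\hat E\). Its arrows are equivalence classes \([s,\varphi]\) of pairs \((s,\varphi)\) with \(s\in S\) and \(\varphi\in U_{s^*s}\), where \((s,\varphi)\sim(t,\psi)\) iff \(\varphi=\psi\) and there is \(e\in E\) with \(se=te\) and \(\varphi(e)=1\). The structure maps are \(\mathrm s([s,\varphi])=\varphi\), \(\mathrm r([s,\varphi])=s\cdot\varphi\), \([s,\varphi][t,\psi]=[st,\psi]\) if \(\varphi=t\cdot\psi\), \([s,\varphi]^{-1}=[s^*,s\cdot\varphi]\), and units \([1,\varphi]\). The arrow space carries the smallest topology in which all sets \(\{[s,\varphi]:\varphi\in U\}\), for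 \(s\in S\) and \(U\subseteq U_{s^*s}\) open, are open. An action of \(S\) on a space \(X\) is a unit- and zero-preserving homomorphism from \(S\) to the inverse semigroup of partial homeomorphisms (homeomorphisms between open subsets) of \(X\). A map \(f\) between \(S\)-spaces is \(S\)-equivariant if \(s\cdot x\) is defined iff \(s\cdot f(x)\) is, and then \(f(s\cdot x)=s\cdot f(x)\). An action of a topological groupoid \(\mathcal G\) on a space \(X\) is a continuous anchor map \(\varrho\colon X\to\mathcal G^{(0)}\) together with a continuous map \(\{(g,x):\mathrm s(g)=\varrho(x)\}\to X\), \((g,x)\mapsto g\cdot x\), satisfying \(\varrho(g\cdot x)=\mathrm r(g)\), \(g_1\cdot(g_2\cdot x)=(g_1g_2)\cdot x\) when defined, and \(1_{\varrho(x)}\cdot x=x\). A map \(f\colon X\to Y\) is \(\mathcal G\)-equivariant if \(\varrho_Y\circ f=\varrho_X\) and \(f(g\cdot x)=g\cdot f(x)\) whenever defined. Spaces need not be Hausdorff. *)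

From HB Require Import structures.
From mathcomp Require Import all_boot all_order.
From mathcomp Require Import boolp classical_sets functions topology.
Set Implicit Arguments. Unset Strict Implicit. Unset Printing Implicit Defensive.
Local Open Scope classical_set_scope.

Record invsemigroup := InvSemigroup {
  isg_car :> Type;
  isg_mul : isg_car -> isg_car -> isg_car;
  isg_star : isg_car -> isg_car;
  isg_zero : isg_car;
  isg_one : isg_car;
  isg_mulA : forall a b c, isg_mul a (isg_mul b c) = isg_mul (isg_mul a b) c;
  isg_reg : forall s, isg_mul (isg_mul s (isg_star s)) s = s;
  isg_regs : forall s, isg_mul (isg_mul (isg_star s) s) (isg_star s) = isg_star s;
  isg_uniq : forall s t, isg_mul (isg_mul s t) s = s ->
                         isg_mul (isg_mul t s) t = t -> t = isg_star s;
  isg_mul1s : forall s, isg_mul isg_one s = s;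
  isg_muls1 : forall s, isg_mul s isg_one = s;
  isg_mul0s : forall s, isg_mul isg_zero s = isg_zero;
  isg_muls0 : forall s, isg_mul s isg_zero = isg_zero
}.

Arguments isg_mul {i}.
Arguments isg_star {i}.
Arguments isg_zero {i}.
Arguments isg_one {i}.

Notation "x '⋅' y" := (isg_mul x y) (at level 40, left associativity).

Section InvSemigroupFacts.
Variable S : invsemigroup.
Implicit Types s t e f g : S.

Definition idem e := e ⋅ e = e.

Lemma isg_idemR e x : idem e -> x ⋅ e ⋅ e = x ⋅ e.
Proof. by move=> He; rewrite -isg_mulA He. Qed.

Lemma isg_starK s : isg_star (isg_star s) = s.
Proof. by symmetry; apply: isg_uniq; [apply: isg_regs | apply: isg_reg]. Qed.

Lemma isg_idem_star e : idem e -> isg_star e = e.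
Proof. by move=> He; symmetry; apply: isg_uniq; rewrite !isg_idemR. Qed.

Lemma regL x s : x ⋅ s ⋅ isg_star s ⋅ s = x ⋅ s.
Proof. by rewrite -!isg_mulA [s ⋅ (_ ⋅ _)]isg_mulA isg_reg. Qed.
Lemma regsL x s : x ⋅ isg_star s ⋅ s ⋅ isg_star s = x ⋅ isg_star s.
Proof. by rewrite -!isg_mulA [isg_star s ⋅ (_ ⋅ _)]isg_mulA isg_regs. Qed.
Lemma isg_idem_mul e f : idem e -> idem f -> idem (e ⋅ f).
Proof.
move=> He Hf; set x := isg_star (e ⋅ f).
have K1 : forall a, a ⋅ x ⋅ e ⋅ f ⋅ x = a ⋅ x.
  move=> a; rewrite -!isg_mulA [e ⋅ (f ⋅ x)]isg_mulA.
  by rewrite [x ⋅ (e ⋅ f ⋅ x)]isg_mulA isg_regs.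
have K2 : forall a, a ⋅ e ⋅ f ⋅ x ⋅ e ⋅ f = a ⋅ e ⋅ f.
  move=> a; rewrite -!isg_mulA [e ⋅ (f ⋅ (x ⋅ (e ⋅ f)))]isg_mulA.
  by rewrite [e ⋅ f ⋅ (x ⋅ (e ⋅ f))]isg_mulA isg_reg.
have Hy : f ⋅ x ⋅ e = x.
  apply: isg_uniq.
    rewrite !isg_mulA (isg_idemR _ Hf) (isg_idemR _ He).
    by have := K2 isg_one; rewrite !isg_mul1s.
  rewrite !isg_mulA (isg_idemR _ He) (isg_idemR _ Hf) K1 //.
have Hx : idem x.
  by rewrite /idem -{1}Hy -{2}Hy !isg_mulA K1.
have : isg_star x = x by apply: isg_idem_star.
by rewrite /x isg_starK => ->.
Qed.
Lemma isg_idem_comm e f : idem e -> idem f -> e ⋅ f = f ⋅ e.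
Proof.
move=> He Hf.
have Hef := isg_idem_mul He Hf.
have Hfe := isg_idem_mul Hf He.
rewrite -{1}(isg_idem_star Hef); symmetry; apply: isg_uniq.
  rewrite !isg_mulA (isg_idemR _ Hf) -[e ⋅ f ⋅ e ⋅ e]isg_mulA He.
  by move: Hef; rewrite /idem isg_mulA.
rewrite !isg_mulA (isg_idemR _ He) -[f ⋅ e ⋅ f ⋅ f]isg_mulA Hf.
by move: Hfe; rewrite /idem isg_mulA.
Qed.

Lemma isg_idem_ss s : idem (isg_star s ⋅ s).
Proof. by rewrite /idem isg_mulA isg_regs. Qed.

Lemma isg_idem_sss s : idem (s ⋅ isg_star s).
Proof. by rewrite /idem isg_mulA isg_reg. Qed.

Lemma isg_idem_conj g e : idem e -> idem (isg_star g ⋅ e ⋅ g).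
Proof.
move=> He; rewrite /idem -!isg_mulA [g ⋅ (isg_star g ⋅ _)]isg_mulA.
rewrite [e ⋅ (g ⋅ isg_star g ⋅ _)]isg_mulA (isg_idem_comm He (isg_idem_sss g)).
by rewrite !isg_mulA isg_regs (isg_idemR _ He).
Qed.

Lemma isg_idem0 : idem (isg_zero : S).
Proof. exact: isg_mul0s. Qed.

Lemma isg_idem1 : idem (isg_one : S).
Proof. exact: isg_mul1s. Qed.

End InvSemigroupFacts.

Definition Idem (S : invsemigroup) := {e : S | idem e}.

Definition zeroE (S : invsemigroup) : Idem S := exist _ isg_zero (@isg_idem0 S).
Definition oneE (S : invsemigroup) : Idem S := exist _ isg_one (@isg_idem1 S).
Definition ssE (S : invsemigroup) (s : S) : Idem S :=
  exist _ (isg_star s ⋅ s) (isg_idem_ss s).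
Definition conjE (S : invsemigroup) (g : S) (e : Idem S) : Idem S :=
  exist _ (isg_star g ⋅ proj1_sig e ⋅ g) (isg_idem_conj g (proj2_sig e)).

Definition is_character (S : invsemigroup) (phi : Idem S -> bool) :=
  [/\ phi (zeroE S) = false, phi (oneE S) = true &
      forall e f h : Idem S, proj1_sig h = proj1_sig e ⋅ proj1_sig f ->
        phi h = phi e && phi f].

Definition Char (S : invsemigroup) := {phi : Idem S -> bool | is_character phi}.

HB.instance Definition _ (S : invsemigroup) := gen_eqMixin (Char S).
HB.instance Definition _ (S : invsemigroup) := gen_choiceMixin (Char S).

Definition Ue (S : invsemigroup) (e : Idem S) : set (Char S) :=
  [set phi | proj1_sig phi e = true].

HB.instance Definition _ (S : invsemigroup) :=
  @isSubBaseTopological.Build (Char S) (set (Char S))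
    [set U | exists e : Idem S, U = Ue e] id.

Definition char_act (S : invsemigroup) (g : S) (phi : Char S) : Idem S -> bool :=
  fun e => proj1_sig phi (conjE g e).

(* Arrows are equivalence classes [s,phi] of pairs with phi in U_{s^*s}, *)
(* represented as the class itself (a set of pairs).                      *)
Definition valid_pair (S : invsemigroup) (p : S * Char S) :=
  proj1_sig p.2 (ssE p.1) = true.

Definition germ_equiv (S : invsemigroup) (p q : S * Char S) :=
  p.2 = q.2 /\
  exists e : Idem S, p.1 ⋅ proj1_sig e = q.1 ⋅ proj1_sig e /\
                     proj1_sig p.2 e = true.

Definition germ_class (S : invsemigroup) (p : S * Char S) : set (S * Char S) :=
  [set q | valid_pair q /\ germ_equiv p q].

Definition Arrow (S : invsemigroup) :=
  {A : set (S * Char S) | exists p, valid_pair p /\ A = germ_class p}.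

HB.instance Definition _ (S : invsemigroup) := gen_eqMixin (Arrow S).
HB.instance Definition _ (S : invsemigroup) := gen_choiceMixin (Arrow S).

Definition germ (S : invsemigroup) (s : S) (phi : Char S)
  (h : valid_pair (s, phi)) : Arrow S :=
  exist _ (germ_class (s, phi)) (ex_intro _ (s, phi) (conj h erefl)).

Definition arrow_rep (S : invsemigroup) (a : Arrow S) : S * Char S :=
  proj1_sig (cid (proj2_sig a)).

Definition arr_src (S : invsemigroup) (a : Arrow S) : Char S := (arrow_rep a).2.
Definition arr_rng (S : invsemigroup) (a : Arrow S) : Idem S -> bool :=
  char_act (arrow_rep a).1 (arrow_rep a).2.

HB.instance Definition _ (S : invsemigroup) :=
  @isSubBaseTopological.Build (Arrow S) (set (Arrow S))
    [set W | exists (s : S) (U : set (Char S)),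
       [/\ open U, U `<=` Ue (ssE s) &
        W = [set a | exists phi (h : valid_pair (s, phi)), U phi /\ a = germ h]]]
    id.

Definition is_phomeo (X : topologicalType) (D : set X) (f : X -> X) :=
  [/\ open D, open (f @` D), {within D, continuous f} &
      exists g : X -> X,
        [/\ forall x, D x -> g (f x) = x,
            forall y, (f @` D) y -> f (g y) = y &
            {within f @` D, continuous g}]].

(* A partial map is encoded by its domain sdom s and a total function
   sact s which, by convention, is the identity outside sdom s (so that
   the encoding is unique). The homomorphism property into the inverse
   semigroup of partial homeomorphisms (composition of partial maps,
   identity, empty map) is written out. *)
Record Saction (S : invsemigroup) (X : topologicalType) := {
  sdom : S -> set X;
  sact : S -> X -> X;
  sact_phomeo : forall s, is_phomeo (sdom s) (sact s);
  sact_out : forall s x, ~ sdom s x -> sact s x = x;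
  sdom_mul : forall s t, sdom (s ⋅ t) = [set x | sdom t x /\ sdom s (sact t x)];
  sact_mul : forall s t x, sdom (s ⋅ t) x -> sact (s ⋅ t) x = sact s (sact t x);
  sdom_one : sdom isg_one = setT;
  sact_one : forall x, sact isg_one x = x;
  sdom_zero : sdom isg_zero = set0
}.

Definition s_equivariant (S : invsemigroup) (X Y : topologicalType)
  (A : Saction S X) (B : Saction S Y) (f : X -> Y) :=
  forall s x, (sdom A s x <-> sdom B s (f x)) /\
              (sdom A s x -> f (sact A s x) = sact B s (f x)).

(* The partially defined action map (g,x) |-> g.x (defined iff
   s(g) = anchor x) is encoded as a total function which, by convention,
   is the identity where undefined.                                     *)
Record Gaction (S : invsemigroup) (X : topologicalType) := {
  anchor : X -> Char S;
  gact : Arrow S -> X -> X;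
  anchor_cont : continuous anchor;
  gact_cont : {within [set p : Arrow S * X | arr_src p.1 = anchor p.2],
               continuous (fun p : Arrow S * X => gact p.1 p.2)};
  gact_out : forall g x, arr_src g <> anchor x -> gact g x = x;
  anchor_gact : forall g x, arr_src g = anchor x ->
    proj1_sig (anchor (gact g x)) = arr_rng g;
  (* [s,phi][t,psi] = [st,psi] when phi = t . psi *)
  gact_comp : forall (s t : S) (phi psi : Char S)
    (h1 : valid_pair (s, phi)) (h2 : valid_pair (t, psi))
    (h3 : valid_pair (s ⋅ t, psi)) (x : X),
    proj1_sig phi = char_act t psi -> psi = anchor x ->
    gact (germ h1) (gact (germ h2) x) = gact (germ h3) x;
  (* the unit 1_{anchor x} = [1, anchor x] *)
  gact_unit : forall x (h : valid_pair (isg_one, anchor x)),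
    gact (germ h) x = x
}.

Definition g_equivariant (S : invsemigroup) (X Y : topologicalType)
  (A : Gaction S X) (B : Gaction S Y) (f : X -> Y) :=
  (forall x, anchor B (f x) = anchor A x) /\
  (forall g x, arr_src g = anchor A x -> f (gact A g x) = gact B g (f x)).

Definition ObjS (S : invsemigroup) := {X : topologicalType & Saction S X}.
Definition ObjG (S : invsemigroup) := {X : topologicalType & Gaction S X}.

Definition HomS (S : invsemigroup) (A B : ObjS S) :=
  {f : projT1 A -> projT1 B |
     continuous f /\ s_equivariant (projT2 A) (projT2 B) f}.
Definition HomG (S : invsemigroup) (A B : ObjG S) :=
  {f : projT1 A -> projT1 B |
     continuous f /\ g_equivariant (projT2 A) (projT2 B) f}.

(* An isomorphism of categories Top^S -> Top^{G(S)}: a functor (preserving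
   identities and composition; morphisms compared by underlying maps)
   which is bijective on objects and on every hom-set. *)
Definition categories_isomorphic (S : invsemigroup) :=
  exists (F : ObjS S -> ObjG S)
         (Fm : forall A B : ObjS S, HomS A B -> HomG (F A) (F B)),
    [/\ forall (A : ObjS S) (i : HomS A A),
          proj1_sig i = id -> proj1_sig (Fm A A i) = id,
        forall (A B C : ObjS S) (f : HomS A B) (g : HomS B C) (h : HomS A C),
          proj1_sig h = proj1_sig g \o proj1_sig f ->
          proj1_sig (Fm A C h) = proj1_sig (Fm B C g) \o proj1_sig (Fm A B f),
        bijective F &
        forall A B : ObjS S, bijective (Fm A B)].

From HB Require Import structures.
From mathcomp Require Import all_boot all_order.
From mathcomp Require Import boolp classical_sets functions topology.
Set Implicit Arguments. Unset Strict Implicit. Unset Printing Implicit Defensive.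
Local Open Scope classical_set_scope.

(* Both kinds of action are the same data.  An action [theta] of [S] on [X]
   yields the anchor [x |-> (e |-> [x \in dom theta_e])] and the groupoid
   action [[s, phi] . x = theta_s x]; this is well defined because [theta_s]
   and [theta_t] agree on [dom theta_e] whenever [se = te], and it is
   continuous because the arrow space is covered by the open bisections
   [{[s, phi]}].  Conversely, a groupoid action yields
   [theta_s x = [s, rho x] . x] on [{x | rho x (s^* s) = 1}]: the groupoid
   composition gives the homomorphism property, and continuity follows along
   the continuous section [x |-> [s, rho x]].  The two constructions keep the
   underlying space, are mutually inverse, and a map is [S]-equivariant iff it
   is [G(S)]-equivariant, so they are an isomorphism of categories which is
   the identity on maps. *)

Lemma proj1_sig_inj (T : Type) (P : T -> Prop) (a b : {x | P x}) :
  proj1_sig a = proj1_sig b -> a = b.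
Proof. by case: a b => a pa [b pb] /= eab; exact: eq_exist. Qed.

Section InverseSemigroup.
Variable S : invsemigroup.
Local Notation st := isg_star.

Lemma isg_star_mul (s t : S) : st (s ⋅ t) = st t ⋅ st s.
Proof.
have comm := isg_idem_comm (isg_idem_sss t) (isg_idem_ss s).
symmetry; apply: isg_uniq.
  have -> : s ⋅ t ⋅ (st t ⋅ st s) ⋅ (s ⋅ t) = s ⋅ (t ⋅ st t ⋅ (st s ⋅ s)) ⋅ t.
    by rewrite !isg_mulA.
  by rewrite comm !isg_mulA isg_reg regL.
have -> : st t ⋅ st s ⋅ (s ⋅ t) ⋅ (st t ⋅ st s) = st t ⋅ (st s ⋅ s ⋅ (t ⋅ st t)) ⋅ st s.
  by rewrite !isg_mulA.
by rewrite -comm !isg_mulA isg_regs regsL.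
Qed.

End InverseSemigroup.

Section Characters.
Variable S : invsemigroup.
Implicit Types (phi : Char S) (e f : Idem S).

Lemma char_congr phi e f : proj1_sig e = proj1_sig f -> proj1_sig phi e = proj1_sig phi f.
Proof. by move=> /proj1_sig_inj ->. Qed.

Lemma char_mul phi e f h : proj1_sig h = proj1_sig e ⋅ proj1_sig f ->
  proj1_sig phi h = proj1_sig phi e && proj1_sig phi f.
Proof. by case: phi => p [? ? H]; exact: H. Qed.

Lemma char0 phi : proj1_sig phi (zeroE S) = false.
Proof. by case: phi => p []. Qed.

Lemma char1 phi : proj1_sig phi (oneE S) = true.
Proof. by case: phi => p []. Qed.

Definition mulE e f : Idem S :=
  exist _ (proj1_sig e ⋅ proj1_sig f) (isg_idem_mul (proj2_sig e) (proj2_sig f)).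

Lemma char_conj_mulr phi e (s : S) f : proj1_sig phi e = true ->
  proj1_sig phi (conjE s f) = proj1_sig phi (conjE (s ⋅ proj1_sig e) f).
Proof.
move=> phie; rewrite (@char_mul phi e (conjE s f) (conjE (s ⋅ proj1_sig e) f)) ?phie //=.
case: e phie => e ie /= _; case: f => f iff /=.
rewrite isg_star_mul (isg_idem_star ie).
have comm := isg_idem_comm ie (isg_idem_conj s iff).
have -> : e ⋅ isg_star s ⋅ f ⋅ (s ⋅ e) = e ⋅ (isg_star s ⋅ f ⋅ s) ⋅ e by rewrite !isg_mulA.
by rewrite -isg_mulA -comm [e ⋅ (e ⋅ _)]isg_mulA ie.
Qed.

Lemma char_conj_germ phi e (s t : S) f :
  proj1_sig phi e = true -> s ⋅ proj1_sig e = t ⋅ proj1_sig e ->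
  proj1_sig phi (conjE s f) = proj1_sig phi (conjE t f).
Proof.
move=> phie est; rewrite (char_conj_mulr s f phie) (char_conj_mulr t f phie).
by apply: char_congr => /=; rewrite est.
Qed.

Lemma valid_one phi : valid_pair (isg_one, phi).
Proof.
rewrite /valid_pair -(char1 phi); apply: char_congr => /=.
by rewrite (isg_idem_star (@isg_idem1 S)) isg_mul1s.
Qed.

End Characters.

Section Germs.
Variable S : invsemigroup.
Implicit Types (p q r : S * Char S) (g : Arrow S).

Lemma germ_equiv_refl p : germ_equiv p p.
Proof. by split=> //; exists (oneE S); split=> //; exact: char1. Qed.

Lemma germ_equiv_sym p q : germ_equiv p q -> germ_equiv q p.
Proof. by case=> E [e [H1 H2]]; split=> //; exists e; split=> //; rewrite -E. Qed.

Lemma germ_equiv_trans p q r : germ_equiv p q -> germ_equiv q r -> germ_equiv p r.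
Proof.
case=> E1 [e [H1 H2]] [E2 [f [H3 H4]]]; split; first by rewrite E1.
exists (mulE e f); split=> /=.
  rewrite isg_mulA H1 -isg_mulA (isg_idem_comm (proj2_sig e) (proj2_sig f)).
  by rewrite !isg_mulA H3.
by rewrite (@char_mul _ _ e f) //= H2 E1 H4.
Qed.

Lemma germ_class_equiv p q : germ_equiv p q -> germ_class p = germ_class q.
Proof.
move=> E; apply/funext => r; apply/propext; split=> -[V H]; split=> //.
  exact: germ_equiv_trans (germ_equiv_sym E) H.
exact: germ_equiv_trans E H.
Qed.

Lemma eq_germ (s t : S) (phi psi : Char S) (h1 : valid_pair (s, phi))
  (h2 : valid_pair (t, psi)) : germ_equiv (s, phi) (t, psi) -> germ h1 = germ h2.
Proof. by move=> E; apply: proj1_sig_inj; apply: germ_class_equiv. Qed.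

Lemma germ_equiv_eq (s t : S) (phi psi : Char S) (h1 : valid_pair (s, phi))
  (h2 : valid_pair (t, psi)) : germ h1 = germ h2 -> germ_equiv (s, phi) (t, psi).
Proof.
move=> /(congr1 (@proj1_sig _ _)) /= E.
have : germ_class (t, psi) (t, psi) by split=> //; exact: germ_equiv_refl.
by rewrite -E => -[].
Qed.

Lemma arrow_repP g : valid_pair (arrow_rep g) /\ proj1_sig g = germ_class (arrow_rep g).
Proof. by rewrite /arrow_rep; case: cid. Qed.

Lemma arrow_rep_valid g : valid_pair ((arrow_rep g).1, (arrow_rep g).2).
Proof. exact: (proj1 (arrow_repP g)). Qed.

Lemma germ_arrow_rep g : g = germ (arrow_rep_valid g).
Proof.
apply: proj1_sig_inj => /=; rewrite (proj2 (arrow_repP g)).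
by case: (arrow_rep g).
Qed.

Lemma arrow_rep_germ (s : S) (phi : Char S) (h : valid_pair (s, phi)) :
  germ_equiv (s, phi) (arrow_rep (germ h)).
Proof.
have [V E] := arrow_repP (germ h).
have : germ_class (arrow_rep (germ h)) (arrow_rep (germ h)).
  by split=> //; exact: germ_equiv_refl.
by rewrite -E => -[].
Qed.

Lemma arr_src_germ (s : S) (phi : Char S) (h : valid_pair (s, phi)) :
  arr_src (germ h) = phi.
Proof. by have [E _] := arrow_rep_germ h; rewrite /arr_src -E. Qed.

End Germs.

Section Topology.

Lemma open_preimage_finI (X : topologicalType) (T : Type) (D : set (set T))
    (f : X -> T) A :
  (forall B, D B -> open (f @^-1` B)) -> finI_from D id A -> open (f @^-1` A).
Proof.
move=> HD; rewrite filterI_iter_finI => -[n _]; elim: n A => [|n IH] A /=.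
  case=> [->|[B DB <-]]; [exact: openT | exact: HD].
by case=> P /IH oP [Q /IH oQ <-]; rewrite preimage_setI; apply: openI.
Qed.

Lemma within_continuousP (X Y : topologicalType) (D : set X) (f : X -> Y) :
  {within D, continuous f} <->
  (forall V, open V -> exists2 W, open W & W `&` D = f @^-1` V `&` D).
Proof.
rewrite continuousP; split=> H V oV.
  by have /open_subspaceP := H V oV.
by apply/open_subspaceP; exact: H.
Qed.

Lemma open_setX (X Y : topologicalType) (A : set X) (B : set Y) :
  open A -> open B -> open (A `*` B).
Proof.
rewrite !openE => oA oB [a b] [/= Aa Bb].
by exists (A, B) => //=; split; [exact: oA | exact: oB].
Qed.

Variable S : invsemigroup.

Lemma Ue_open (e : Idem S) : open (Ue e).
Proof.
exists [set Ue e]; last by rewrite bigcup_set1.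
by move=> _ ->; apply: finI_from1; exists e.
Qed.

Lemma char_continuous (X : topologicalType) (f : X -> Char S) :
  (forall e, open (f @^-1` Ue e)) -> continuous f.
Proof.
move=> fUe; apply/continuousP => A [D sD <-].
rewrite preimage_bigcup; apply: bigcup_open => i /sD Di.
by apply: (open_preimage_finI _ Di) => B [e ->].
Qed.

Definition germ_set (s : S) (U : set (Char S)) : set (Arrow S) :=
  [set a | exists phi (h : valid_pair (s, phi)), U phi /\ a = germ h].

Lemma germ_set_open (s : S) U : open U -> U `<=` Ue (ssE s) -> open (germ_set s U).
Proof.
move=> oU sU; exists [set germ_set s U]; last by rewrite bigcup_set1.
by move=> _ ->; apply: finI_from1; exists s, U.
Qed.

Lemma arrow_continuous (X : topologicalType) (f : X -> Arrow S) :
  (forall s U, open U -> U `<=` Ue (ssE s) -> open (f @^-1` germ_set s U)) ->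
  continuous f.
Proof.
move=> fN; apply/continuousP => A [D sD <-].
rewrite preimage_bigcup; apply: bigcup_open => i /sD Di.
by apply: (open_preimage_finI _ Di) => B [s [U [oU sU ->]]]; exact: fN.
Qed.

End Topology.

Section GroupoidActionOfSemigroupAction.
Variables (S : invsemigroup) (X : topologicalType) (A : Saction S X).
Local Notation st := isg_star.
Local Notation dom := (sdom A).
Local Notation act := (sact A).

Lemma sdom_open s : open (dom s).
Proof. by case: (sact_phomeo A s). Qed.

Lemma sdom_mulP s t x : dom (s ⋅ t) x <-> dom t x /\ dom s (act t x).
Proof. by rewrite sdom_mul. Qed.

Lemma sact_idem e x : idem e -> dom e x -> act e x = x.
Proof.
move=> ie Dx; have [_ _ _ [g [gK _ _]]] := sact_phomeo A e.
have Dee : dom (e ⋅ e) x by rewrite ie.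
have E := sact_mul Dee; rewrite ie in E.
move: Dee; rewrite sdom_mul => -[_ Dex].
by have := gK _ Dex; rewrite -E gK.
Qed.

Lemma sdom_star s x : dom s x -> dom (st s) (act s x).
Proof.
move=> D; have : dom (s ⋅ st s ⋅ s) x by rewrite isg_reg.
by move=> /sdom_mulP [_ /sdom_mulP []].
Qed.

Lemma sdom_ss s x : dom (st s ⋅ s) x <-> dom s x.
Proof.
split; first by move=> /sdom_mulP [].
by move=> D; apply/sdom_mulP; split=> //; exact: sdom_star.
Qed.

Lemma sact_germ s t e x : idem e -> s ⋅ e = t ⋅ e -> dom e x ->
  (dom s x <-> dom t x) /\ (dom s x -> act s x = act t x).
Proof.
move=> ie E De.
have K u : (dom u x <-> dom (u ⋅ e) x) /\ (dom u x -> act (u ⋅ e) x = act u x).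
  have Ee := sact_idem ie De.
  have Due : dom u x -> dom (u ⋅ e) x by move=> Du; apply/sdom_mulP; rewrite Ee.
  split; first by split=> // /sdom_mulP [_]; rewrite Ee.
  by move=> Du; rewrite (sact_mul (Due Du)) Ee.
split; first by rewrite (proj1 (K s)) E -(proj1 (K t)).
move=> Ds; rewrite -(proj2 (K s) Ds) E (proj2 (K t)) //.
by apply/(proj1 (K t)); rewrite -E; apply/(proj1 (K s)).
Qed.

Definition dom_char (x : X) : Idem S -> bool := fun e => `[< dom (proj1_sig e) x >].

Lemma dom_char_is_character x : is_character (dom_char x).
Proof.
split.
- by apply/asboolP => /=; rewrite sdom_zero.
- by apply/asboolP => /=; rewrite sdom_one.
- move=> e f h E; rewrite /dom_char E.
  apply/idP/andP => [/asboolP /sdom_mulP [Df De]|[/asboolP De /asboolP Df]].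
    by rewrite sact_idem in De; [split; apply/asboolP | exact: (proj2_sig f)|].
  by apply/asboolP/sdom_mulP; rewrite sact_idem //; exact: (proj2_sig f).
Qed.

Definition anchorS (x : X) : Char S := exist _ (dom_char x) (dom_char_is_character x).

Lemma valid_sdom s x : valid_pair (s, anchorS x) <-> dom s x.
Proof. by rewrite /valid_pair /= -sdom_ss; split => /asboolP. Qed.

Lemma sdom_conj t f x : idem f -> dom t x ->
  (dom (st t ⋅ f ⋅ t) x <-> dom f (act t x)).
Proof.
move=> iff Dt; rewrite sdom_mulP sdom_mulP; split => [[_ []]//|Df].
by split=> //; split=> //; rewrite sact_idem //; exact: sdom_star.
Qed.

Lemma anchorS_sact t x : dom t x ->
  proj1_sig (anchorS (act t x)) = char_act t (anchorS x).
Proof.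
move=> Dt; apply/funext => f; rewrite /char_act /= /dom_char /=.
by apply/idP/idP => /asboolP H; apply/asboolP; apply/(sdom_conj (proj2_sig f) Dt).
Qed.

Lemma anchorS_continuous : continuous anchorS.
Proof.
apply: char_continuous => e.
have -> : anchorS @^-1` Ue e = dom (proj1_sig e).
  by apply/funext => x; apply/propext; split => /asboolP.
exact: sdom_open.
Qed.

Definition gactS (g : Arrow S) (x : X) : X :=
  if `[< arr_src g = anchorS x >] then act (arrow_rep g).1 x else x.

Lemma gactS_rep g x : arr_src g = anchorS x ->
  dom (arrow_rep g).1 x /\ gactS g x = act (arrow_rep g).1 x.
Proof.
move=> E; rewrite /gactS asboolT //; split=> //.
by apply/valid_sdom; rewrite -E; exact: arrow_rep_valid.
Qed.

Lemma gactS_germ s phi (h : valid_pair (s, phi)) x : phi = anchorS x ->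
  dom s x /\ gactS (germ h) x = act s x.
Proof.
move=> E; have Ds : dom s x by apply/valid_sdom; rewrite -E.
have [_ ->] := gactS_rep (etrans (arr_src_germ h) E).
split=> //.
have [_ [e [H1 H2]]] := arrow_rep_germ h.
have De : dom (proj1_sig e) x by move: H2; rewrite E => /asboolP.
by rewrite ((sact_germ (proj2_sig e) H1 De).2 Ds).
Qed.

Lemma gactS_out g x : arr_src g <> anchorS x -> gactS g x = x.
Proof. by move=> H; rewrite /gactS asboolF. Qed.

Lemma anchorS_gactS g x : arr_src g = anchorS x ->
  proj1_sig (anchorS (gactS g x)) = arr_rng g.
Proof. by move=> E; have [D ->] := gactS_rep E; rewrite anchorS_sact // -E. Qed.

Lemma gactS_comp (s t : S) (phi psi : Char S)
    (h1 : valid_pair (s, phi)) (h2 : valid_pair (t, psi))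
    (h3 : valid_pair (s ⋅ t, psi)) (x : X) :
  proj1_sig phi = char_act t psi -> psi = anchorS x ->
  gactS (germ h1) (gactS (germ h2) x) = gactS (germ h3) x.
Proof.
move=> Ephi Epsi.
have [Dt ->] := gactS_germ h2 Epsi.
have [Dst ->] := gactS_germ h3 Epsi.
have E : phi = anchorS (act t x) by apply: proj1_sig_inj; rewrite Ephi Epsi anchorS_sact.
by have [_ ->] := gactS_germ h1 E; rewrite sact_mul.
Qed.

Lemma gactS_unit x (h : valid_pair (isg_one, anchorS x)) : gactS (germ h) x = x.
Proof. by have [_ ->] := gactS_germ h erefl; rewrite sact_one. Qed.

(* The preimage of [V] is covered by the open boxes [germ_set s U_(s^* s) * O_s],
   where [O_s] cuts out [act s @^-1` V] on [dom s]. *)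
Lemma gactS_continuous :
  {within [set p : Arrow S * X | arr_src p.1 = anchorS p.2],
   continuous (fun p : Arrow S * X => gactS p.1 p.2)}.
Proof.
apply/within_continuousP => V oV.
have H s : exists2 W, open W & W `&` dom s = act s @^-1` V `&` dom s.
  by case: (sact_phomeo A s) => _ _ /within_continuousP C _; exact: C.
pose O s := projT1 (cid2 (H s)).
have oO s : open (O s) by rewrite /O; case: cid2.
have EO s : O s `&` dom s = act s @^-1` V `&` dom s by rewrite /O; case: cid2.
exists (\bigcup_(s in setT) (germ_set s (Ue (ssE s)) `*` (dom s `&` O s))).
  apply: bigcup_open => s _; apply: open_setX.
    by apply: germ_set_open => //; exact: Ue_open.
  by apply: openI; [exact: sdom_open | exact: oO].
apply/funext => -[g x]; apply/propext; split.
  move=> [[s _ [[/= phi [h [_ Eg]]] [Dx Ox]]] /= Pp]; split=> //=.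
  have Ephi : phi = anchorS x by rewrite -Pp Eg arr_src_germ.
  rewrite Eg; have [_ ->] := gactS_germ h Ephi.
  have : (O s `&` dom s) x by [].
  by rewrite EO => -[].
move=> [/= Vx Pp]; split=> //.
have [Dx Ex] := gactS_rep Pp.
exists (arrow_rep g).1 => //; split => /=.
  exists (arrow_rep g).2, (arrow_rep_valid g); split; first exact: arrow_rep_valid.
  exact: germ_arrow_rep.
split=> //.
have : (act (arrow_rep g).1 @^-1` V `&` dom (arrow_rep g).1) x by split=> //=; rewrite -Ex.
by rewrite -EO => -[].
Qed.

Definition groupoid_action : Gaction S X :=
  @Build_Gaction S X anchorS gactS anchorS_continuous gactS_continuous gactS_out
    anchorS_gactS gactS_comp gactS_unit.

End GroupoidActionOfSemigroupAction.

Section SemigroupActionOfGroupoidAction.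
Variables (S : invsemigroup) (X : topologicalType) (B : Gaction S X).
Local Notation st := isg_star.
Local Notation rho := (anchor B).

Definition domG (s : S) : set X := fun x => valid_pair (s, rho x).

Definition actG (s : S) (x : X) : X :=
  match pselect (valid_pair (s, rho x)) with
  | left h => gact B (germ h) x
  | right _ => x
  end.

Lemma actG_germ s x (h : valid_pair (s, rho x)) : actG s x = gact B (germ h) x.
Proof. by rewrite /actG; case: pselect => [h'|//]; rewrite (Prop_irrelevance h' h). Qed.

Lemma actG_out s x : ~ domG s x -> actG s x = x.
Proof. by rewrite /actG; case: pselect. Qed.

Lemma anchor_actG s x : domG s x -> proj1_sig (rho (actG s x)) = char_act s (rho x).
Proof.
move=> Dx; rewrite (actG_germ Dx) anchor_gact; last by rewrite arr_src_germ.
have [E [e [H1 H2]]] := arrow_rep_germ Dx.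
rewrite /arr_rng -E /=; apply/funext => f; symmetry; exact: char_conj_germ H2 H1.
Qed.

(* [(st)^*(st) = t^* (s^* s) t], and [rho x] of it splits off [rho x (t^* t)]. *)
Lemma domG_mul s t x : domG (s ⋅ t) x <-> domG t x /\ domG s (actG t x).
Proof.
have E1 : proj1_sig (rho x) (ssE (s ⋅ t)) = proj1_sig (rho x) (conjE t (ssE s)).
  by apply: char_congr => /=; rewrite isg_star_mul !isg_mulA.
have E2 : proj1_sig (rho x) (conjE t (ssE s)) =
    proj1_sig (rho x) (conjE t (ssE s)) && proj1_sig (rho x) (ssE t).
  apply: char_mul => /=; rewrite -!isg_mulA; do 3 congr (_ ⋅ _).
  by rewrite isg_mulA isg_reg.
rewrite /domG /valid_pair E1; split.
  move=> H; have Dt : domG t x by move: H; rewrite E2 => /andP [].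
  by split=> //; rewrite /domG /valid_pair /= anchor_actG.
by move=> [Dt]; rewrite /domG /valid_pair /= anchor_actG.
Qed.

Lemma actG_mul s t x : domG (s ⋅ t) x -> actG (s ⋅ t) x = actG s (actG t x).
Proof.
move=> /[dup] Dst /domG_mul [Dt Ds].
have := gact_comp Ds Dt Dst (anchor_actG Dt) erefl.
by rewrite -(actG_germ Dt) -(actG_germ Ds) -(actG_germ Dst) => ->.
Qed.

Lemma domG_ss s x : domG (st s ⋅ s) x <-> domG s x.
Proof.
rewrite /domG /valid_pair (@char_congr _ _ _ (ssE s)) //=.
by rewrite (isg_idem_star (isg_idem_ss s)); exact: isg_idem_ss.
Qed.

Lemma actG_idem e x : idem e -> domG e x -> actG e x = x.
Proof.
move=> ie De; rewrite (actG_germ De) (eq_germ De (valid_one (rho x))).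
  exact: gact_unit.
split=> //; exists (exist _ e ie); split=> /=; first by rewrite ie isg_mul1s.
move: De; rewrite /domG /valid_pair => <-; apply: char_congr => /=.
by rewrite (isg_idem_star ie) ie.
Qed.

Lemma domG_open s : open (domG s).
Proof. by have := proj1 (continuousP _) (@anchor_cont S X B) _ (Ue_open (ssE s)). Qed.

Lemma domG_star s x : domG s x -> domG (st s) (actG s x).
Proof. by move=> /domG_ss /domG_mul []. Qed.

Lemma domG_sss s y : domG (st s) y -> domG (s ⋅ st s) y.
Proof. by have := domG_ss (st s) y; rewrite isg_starK => -[_]. Qed.

Lemma actG_image s : actG s @` domG s = domG (st s).
Proof.
apply/funext => y; apply/propext; split.
  by move=> [x Dx <-]; exact: domG_star.
move=> Dy; exists (actG (st s) y).
  by have := domG_star Dy; rewrite isg_starK.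
by rewrite -actG_mul ?actG_idem //; [exact: isg_idem_sss | exact: domG_sss..].
Qed.

(* The bisection [x |-> [s, rho x]]; off [domG s] its value is an arbitrary unit. *)
Definition germ_section (s : S) (x : X) : Arrow S :=
  match pselect (valid_pair (s, rho x)) with
  | left h => germ h
  | right _ => germ (valid_one (rho x))
  end.

Lemma germ_sectionE s x (h : valid_pair (s, rho x)) : germ_section s x = germ h.
Proof.
by rewrite /germ_section; case: pselect => [h'|//]; rewrite (Prop_irrelevance h' h).
Qed.

Lemma germ_section_continuous s : {within domG s, continuous (germ_section s)}.
Proof.
apply: arrow_continuous => t U oU sU; apply/open_subspaceP.
pose E := [set e : Idem S | s ⋅ proj1_sig e = t ⋅ proj1_sig e].
exists (rho @^-1` \bigcup_(e in E) (U `&` Ue e)).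
  apply: (proj1 (continuousP _) (@anchor_cont S X B)); apply: bigcup_open => e _.
  by apply: openI => //; exact: Ue_open.
apply/funext => x; apply/propext; split=> -[H Dx]; split=> //.
  case: H => e /= Ee [Ux Uex]; change (germ_set t U (germ_section s x)).
  rewrite (germ_sectionE Dx).
  exists (rho x), (sU _ Ux); split=> //.
  by apply: eq_germ; split=> //; exists e.
have {H} : germ_set t U (germ_section s x) by [].
rewrite (germ_sectionE Dx) => -[phi [h [Uphi Eg]]].
have [Ep [e [He1 He2]]] := germ_equiv_eq Eg.
by rewrite /= in Ep He1 He2; subst phi; exists e.
Qed.

(* [actG s] is [gact B] composed with [x |-> (germ_section s x, x)]. *)
Lemma actG_continuous s : {within domG s, continuous (actG s)}.
Proof.
apply/within_continuousP => V oV.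
have [W oW EW] := proj1 (within_continuousP _ _) (@gact_cont S X B) V oV.
exists (domG s `&` [set x | W (germ_section s x, x)]).
  rewrite openE => x [Dx Wx].
  have := oW; rewrite openE => /(_ _ Wx) [[Q R] [/= NQ NR] QRW].
  have Hc := @germ_section_continuous s.
  rewrite continuous_open_subspace in Hc; last exact: domG_open.
  have NQ' : nbhs x (germ_section s @^-1` Q) by exact: (Hc x (mem_set Dx) Q NQ).
  have ND : nbhs x (domG s) by apply: open_nbhs_nbhs; split=> //; exact: domG_open.
  apply: filterS (filterI ND (filterI NQ' NR)) => y [Dy [Qy Ry]].
  by split=> //; apply: QRW.
apply/funext => x; apply/propext; split=> -[H Dx]; split=> //.
  case: H => _ Wx.
  have : (W `&` [set p : Arrow S * X | arr_src p.1 = rho p.2]) (germ_section s x, x).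
    by split=> //=; rewrite (germ_sectionE Dx) arr_src_germ.
  by rewrite EW => -[/=]; rewrite (germ_sectionE Dx) -(actG_germ Dx).
split=> //.
have : ((fun p : Arrow S * X => gact B p.1 p.2) @^-1` V
   `&` [set p : Arrow S * X | arr_src p.1 = rho p.2]) (germ_section s x, x).
  by split=> /=; rewrite (germ_sectionE Dx) ?arr_src_germ // -(actG_germ Dx).
by rewrite -EW => -[].
Qed.

Lemma actG_phomeo s : is_phomeo (domG s) (actG s).
Proof.
split; first exact: domG_open.
- by rewrite actG_image; exact: domG_open.
- exact: actG_continuous.
exists (actG (st s)); split.
- move=> x Dx; have Dssx : domG (st s ⋅ s) x by apply/domG_ss.
  by rewrite -actG_mul // actG_idem //; exact: isg_idem_ss.
- rewrite actG_image => y Dy; have Dsy := domG_sss Dy.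
  by rewrite -actG_mul // actG_idem //; exact: isg_idem_sss.
- rewrite actG_image; exact: actG_continuous.
Qed.

Lemma domG_mulE s t : domG (s ⋅ t) = [set x | domG t x /\ domG s (actG t x)].
Proof. by apply/funext => x; apply/propext; exact: domG_mul. Qed.

Lemma domG_one : domG isg_one = setT.
Proof. by apply/funext => x; apply/propext; split=> // _; exact: valid_one. Qed.

Lemma actG_one x : actG isg_one x = x.
Proof. by rewrite (actG_germ (valid_one (rho x))) gact_unit. Qed.

Lemma domG_zero : domG isg_zero = set0.
Proof.
apply/funext => x; apply/propext; split=> //.
rewrite /domG /valid_pair (@char_congr _ _ _ (zeroE S)) ?char0 //=.
exact: isg_muls0.
Qed.

Definition semigroup_action : Saction S X :=
  @Build_Saction S X domG actG actG_phomeo actG_out domG_mulE actG_mul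
    domG_one actG_one domG_zero.

End SemigroupActionOfGroupoidAction.

Section Isomorphism.
Variable S : invsemigroup.

Lemma Saction_ext (X : topologicalType) (A1 A2 : Saction S X) :
  sdom A1 = sdom A2 -> sact A1 = sact A2 -> A1 = A2.
Proof.
case: A1 A2 => d1 a1 ? ? ? ? ? ? ? [d2 a2 ? ? ? ? ? ? ?] /= Ed Ea; subst.
by f_equal; apply: Prop_irrelevance.
Qed.

Lemma Gaction_ext (X : topologicalType) (B1 B2 : Gaction S X) :
  anchor B1 = anchor B2 -> gact B1 = gact B2 -> B1 = B2.
Proof.
case: B1 B2 => r1 g1 ? ? ? ? ? ? [r2 g2 ? ? ? ? ? ?] /= Er Eg; subst.
by f_equal; apply: Prop_irrelevance.
Qed.

Lemma groupoid_actionK (X : topologicalType) (A : Saction S X) :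
  semigroup_action (groupoid_action A) = A.
Proof.
apply: Saction_ext.
  by apply/funext => s; apply/funext => x; apply/propext; exact: valid_sdom.
apply/funext => s; apply/funext => x; rewrite /= /actG; case: pselect => [h|h].
  exact: (gactS_germ h erefl).2.
by rewrite sact_out // -(valid_sdom A).
Qed.

Lemma anchorS_semigroup_action (X : topologicalType) (B : Gaction S X) x :
  anchorS (semigroup_action B) x = anchor B x.
Proof.
apply: proj1_sig_inj; apply/funext => e /=.
rewrite /dom_char /= /domG /valid_pair asboolb.
by apply: char_congr => /=; case: e => e ie /=; rewrite (isg_idem_star ie).
Qed.

Lemma semigroup_actionK (X : topologicalType) (B : Gaction S X) :
  groupoid_action (semigroup_action B) = B.
Proof.
apply: Gaction_ext; first by apply/funext => x; exact: anchorS_semigroup_action.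
apply/funext => g; apply/funext => x; rewrite /= /gactS anchorS_semigroup_action.
case: (pselect (arr_src g = anchor B x)) => [E|E]; last by rewrite asboolF // gact_out.
rewrite asboolT //.
have h : valid_pair ((arrow_rep g).1, anchor B x) by rewrite -E; exact: arrow_rep_valid.
change (actG B (arrow_rep g).1 x = gact B g x).
rewrite (actG_germ h) [in RHS](germ_arrow_rep g); congr gact.
by apply: eq_germ; rewrite -E; exact: germ_equiv_refl.
Qed.

Lemma groupoid_action_equivariant (X Y : topologicalType) (A1 : Saction S X)
    (A2 : Saction S Y) (f : X -> Y) :
  g_equivariant (groupoid_action A1) (groupoid_action A2) f <-> s_equivariant A1 A2 f.
Proof.
split=> [[Ef Hf] s x|Hf].
  split; first by rewrite -(valid_sdom A1) -(valid_sdom A2); have /= -> := Ef x.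
  move=> D; have h : valid_pair (s, anchorS A1 x) by apply/valid_sdom.
  rewrite -(gactS_germ h erefl).2 -(gactS_germ h (esym (Ef x))).2.
  by apply: Hf; exact: arr_src_germ.
have Ef x : anchorS A2 (f x) = anchorS A1 x.
  apply: proj1_sig_inj; apply/funext => e /=; rewrite /dom_char.
  by apply/idP/idP => /asboolP H; apply/asboolP; apply/(proj1 (Hf _ _)).
split=> // g x E /=.
have [D1 ->] := gactS_rep E.
have [D2 ->] := gactS_rep (etrans E (esym (Ef x))).
exact: (proj2 (Hf _ _)).
Qed.

Definition groupoid_action_obj (A : ObjS S) : ObjG S :=
  existT _ (projT1 A) (groupoid_action (projT2 A)).

Definition groupoid_action_hom (A B : ObjS S) (f : HomS A B) :
    HomG (groupoid_action_obj A) (groupoid_action_obj B) :=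
  exist _ (proj1_sig f) (conj (proj1 (proj2_sig f))
    (proj2 (groupoid_action_equivariant _ _ _) (proj2 (proj2_sig f)))).

Definition semigroup_action_hom (A B : ObjS S)
    (f : HomG (groupoid_action_obj A) (groupoid_action_obj B)) : HomS A B :=
  exist _ (proj1_sig f) (conj (proj1 (proj2_sig f))
    (proj1 (groupoid_action_equivariant _ _ _) (proj2 (proj2_sig f)))).

End Isomorphism.

Unset Implicit Arguments.

Theorem theorem3p7 (S : invsemigroup) : categories_isomorphic S.
Proof.
exists (@groupoid_action_obj S), (@groupoid_action_hom S); split=> //.
- exists (fun B : ObjG S => existT _ (projT1 B) (semigroup_action (projT2 B))).
    by case=> X A; rewrite /groupoid_action_obj /= groupoid_actionK.
  by case=> X B; rewrite /groupoid_action_obj /= semigroup_actionK.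
- move=> A B; exists (@semigroup_action_hom S A B) => -[f pf]; exact: eq_exist.
Qed.
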